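(* Let $d\ge 3$, $F \leq F' \leq \mathrm{Sym}(\Omega)$ with $F'$ preserving each $F$-orbit in $\Omega$, and $n = [F':F]$. Let $G(F,F')$ act on $X_{n,d}$ via the embedding $\varphi$, i.e. $\gamma \cdot (f,e) = (f^\gamma, \gamma e)$ with $(f^\gamma)_v = \alpha(\sigma(\gamma,\gamma^{-1}v)) \cdot f_{\gamma^{-1}v}$. Then: (a) $G(F,F')^\ast$ acts on the vertex set of $X_{n,d}$ with finitely many orbits; if $F$ is transitive on $\Omega$, then $G(F,F')^\ast$ acts transitively on the vertices of $X_{n,d}$. (b) For every $e \in E_d$, the stabilizer of the vertex $((0),e)$ in $G(F,F')$ equals the stabilizer of $e$ in $U(F)$. In particular the action of $G(F,F')$ on $X_{n,d}$ is proper. Consequently, when $F$ is regular, $G(F,F')^\ast$ acts freely and transitively on the vertices of $X_{n,d}$.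
   Context: $\Omega$ is a set with $|\Omega|=d$; $T_d$ is the $d$-regular tree with vertex set $V_d$, edge set $E_d$, with a coloring $c: E_d\to\Omega$ restricting at each vertex $v$ to a bijection from the set $E(v)$ of edges at $v$ onto $\Omega$. Local permutation: $\sigma(g,v) = c|_{E(gv)} \circ g \circ (c|_{E(v)})^{-1}$. $U(F)$: automorphisms with all local permutations in $F$. $G(F,F')$: automorphisms with all local permutations in $F'$ and all but finitely many in $F$, with the topology making the inclusion of $U(F)$ continuous and open; $G(F,F')^\ast$ is its index-two subgroup preserving the bipartition of $T_d$. A permutation group is semi-regular if point stabilizers are trivial, regular if transitive and semi-regular. $\Sigma_n=\{0,\dots,n-1\}$, $\mathfrak S_n=\mathrm{Sym}(\Sigma_n)$; $\alpha: F' \to \mathfrak{S}_n$ is the action of $F'$ on $F'/F$ transported via a fixed bijection $\Sigma_n \to F'/F$ with $0 \mapsto F$. The graph $X_{n,d}$ has vertex set $\Sigma_n^{(V_d)} \times E_d$ ($\Sigma_n^{(V_d)}$ the finitely supported functions $f: V_d\to\Sigma_n$); $(f,e)\sim(f,e')$ (type 1) if $e,e'$ share exactly one vertex, and $(f,e)\sim(f',e)$ (type 2) if $f'$ differs from $f$ at exactly one vertex, which lies in $e$. $(0)$ denotes the zero function. *)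

From HB Require Import structures.
From mathcomp Require Import all_boot all_order all_fingroup.
Set Implicit Arguments. Unset Strict Implicit. Unset Printing Implicit Defensive.

Local Open Scope group_scope.

Section Tree.
Variable d : nat.
(* Omega = 'I_d.  Vertices of T_d: reduced words over 'I_d (no two consecutive
   equal letters), stored with the LAST letter at the head of the list.
   v and v.a are adjacent, the edge {v, v.a} having colour a. *)
Definition reduced (s : seq 'I_d) : bool := sorted (fun x y : 'I_d => x != y) s.

Definition V := {s : seq 'I_d | reduced s}.

Definition step_seq (s : seq 'I_d) (a : 'I_d) : seq 'I_d :=
  if ohead s == Some a then behead s else a :: s.

Lemma reduced_behead s : reduced s -> reduced (behead s).
Proof. by case: s => //= x s /path_sorted. Qed.

Lemma reduced_step s a : reduced s -> reduced (step_seq s a).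
Proof.
rewrite /step_seq; case: s => [|x s] //= H.
case: eqP => [_|ne] //=; first exact: path_sorted H.
rewrite /reduced /= H andbT; apply/eqP => ax; apply: ne; by rewrite ax.
Qed.

Definition step (v : V) (a : 'I_d) : V :=
  exist _ (step_seq (val v) a) (reduced_step a (valP v)).

Definition vbehead (v : V) : V :=
  exist _ (behead (val v)) (reduced_behead (valP v)).

Definition adj (u w : V) : bool := [exists a, w == step u a].

(* Edges of T_d: an edge is represented by its endpoint farther from the root
   (a nonempty word); its endpoints are e and vbehead e. *)
Definition E := {v : V | 0 < size (val v)}.

Definition is_aut (g : V -> V) : Prop :=
  bijective g /\ forall u w, adj (g u) (g w) = adj u w.

Definition loc (g : V -> V) (v : V) (a : 'I_d) : 'I_d :=
  odflt a [pick b | g (step v a) == step (g v) b].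

(* local permutation sigma(g, v) (identity if g is not locally injective) *)
Definition lp (g : V -> V) (v : V) : {perm 'I_d} :=
  insubd (1 : {perm 'I_d}) [ffun a => loc g v a].

Definition longer (u w : V) : V := if size (val w) < size (val u) then u else w.
Definition eact (g : V -> V) (e : E) : E :=
  odflt e (insub (longer (g (val e)) (g (vbehead (val e))))).

Definition inU (F : {set {perm 'I_d}}) (g : V -> V) : Prop :=
  is_aut g /\ forall v, lp g v \in F.

Definition inG (F F' : {set {perm 'I_d}}) (g : V -> V) : Prop :=
  [/\ is_aut g, (forall v, lp g v \in F') &
      exists s : seq V, forall v, lp g v \notin F -> v \in s].

(* G(F,F')^*: elements preserving the bipartition (parity of word length) *)
Definition inGstar (F F' : {set {perm 'I_d}}) (g : V -> V) : Prop :=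
  inG F F' g /\ forall v, odd (size (val (g v))) = odd (size (val v)).

Definition regular_pgroup (F : {group {perm 'I_d}}) : Prop :=
  [transitive F, on [set: 'I_d] | 'P] /\ forall a, 'C_F[a | 'P] = 1.

Variable n : nat.
(* alpha : F' -> Sym(Sigma_n), action of F' on F'/F = {s o f | f in F}
   (function composition), transported along beta : 'I_n -> cosets.
   In MathComp (p * q) = q o p, so the coset s o F is the right coset F :* s
   and p o - acts as (- :* p). *)
Definition alpha (beta : 'I_n -> {set {perm 'I_d}}) (p : {perm 'I_d}) (i : 'I_n)
  : 'I_n := odflt i [pick j | beta j == beta i :* p].

(* vertices of X_{n,d}: pairs (f, e) with f finitely supported *)
Definition finsupp (f : V -> 'I_n) : Prop :=
  exists s : seq V, forall v, val (f v) != 0 -> v \in s.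

(* g . (f, e) = (f', e')  iff  f'(g w) = alpha(sigma(g,w)) (f w) for all w
   and g e = e'  (this determines f' since g is bijective) *)
Definition xact (beta : 'I_n -> {set {perm 'I_d}}) (g : V -> V)
  (x y : (V -> 'I_n) * E) : Prop :=
  (forall w, y.1 (g w) = alpha beta (lp g w) (x.1 w)) /\ eact g x.2 = y.2.

End Tree.

From HB Require Import structures.
From mathcomp Require Import all_boot all_order all_fingroup zify.
Set Implicit Arguments. Unset Strict Implicit. Unset Printing Implicit Defensive.
Local Open Scope group_scope.

(* An automorphism of T_d is determined by the image of one vertex and its
   local permutations, and conversely any choice of local permutations that
   is consistent along edges (an edge has the same image colour seen from
   either end) integrates to an automorphism.  To move (f, e) to (f', e'),
   grow g outward from an even endpoint of e, choosing at each vertex w a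
   local permutation in F' that sends the incoming colour to the prescribed
   one and the coset f w to f' (g w).  It exists because F' preserves the
   F-orbits, and it can be taken in F whenever both cosets are trivial, which
   happens off a finite set; so g lies in G(F,F')^*.  An element fixing
   ((0), e) has all its local permutations fixing the trivial coset, i.e. in
   F.  When F is regular, a permutation of F' fixing a coset and a colour is
   trivial, so fixing one edge spreads to fixing the whole tree. *)

Section Tree.
Variable d : nat.
Implicit Types (u v w x y : V d) (a b c : 'I_d) (t : seq 'I_d).

Lemma val_step v a : val (step v a) = step_seq (val v) a.
Proof. by []. Qed.

Lemma step_seq_cons a s : reduced (a :: s) -> step_seq s a = a :: s.
Proof.
rewrite /step_seq; case: s => [|b s] //= /andP[ab _].
by case: eqP => // -[ba]; rewrite ba eqxx in ab.
Qed.

Lemma stepK v a : step (step v a) a = v.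
Proof.
case: v => s Hs; apply: val_inj; rewrite !val_step /=.
case: s Hs => [|x s] Hs; first by rewrite /step_seq /= eqxx.
rewrite {2}/step_seq /=; case: eqP => [[<-]|_]; last by rewrite /step_seq /= eqxx.
exact: step_seq_cons.
Qed.

Lemma size_step v a :
  size (val (step v a)) = if ohead (val v) == Some a then (size (val v)).-1
                          else (size (val v)).+1.
Proof. by rewrite val_step /step_seq; case: ifP => //; case: (val v). Qed.

Lemma odd_step v a : odd (size (val (step v a))) = ~~ odd (size (val v)).
Proof.
rewrite size_step; case: ifP => //=; case: (val v) => //= x s _.
by rewrite negbK.
Qed.

Lemma step_inj v : injective (step v).
Proof.
move=> a b /(congr1 val); rewrite !val_step /step_seq.
case: (val v) => [|x s] /=; first by case.
case: (eqVneq (Some x) (Some a)) => [[<-]|_];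
  case: (eqVneq (Some x) (Some b)) => [[<-]|_] //=; last by case.
all: by move=> /(congr1 size) /=; lia.
Qed.

Lemma adjP u w : reflect (exists a, w = step u a) (adj u w).
Proof. by apply: (iffP existsP) => -[a]; [move/eqP|move->]; exists a. Qed.

Definition vroot : V d := exist _ [::] isT.

(* The letters of [t] are applied from the last one to the head, the order in
   which vertices are stored, so that [walk vroot (val v) = v]. *)
Definition walk x t : V d := foldr (fun a y => step y a) x t.

Lemma walk_cons x a t : walk x (a :: t) = step (walk x t) a.
Proof. by []. Qed.

Lemma walk_step_seq x s a : reduced s ->
  walk x (step_seq s a) = step (walk x s) a.
Proof.
rewrite /step_seq; case: s => [|y s] //= Hs.
by case: eqP => [[<-]|_] //=; rewrite stepK.
Qed.

Lemma walkA x y t : walk x (val (walk y t)) = walk (walk x (val y)) t.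
Proof.
elim: t => [|a t IH] //.
by rewrite !walk_cons val_step walk_step_seq ?IH //; exact: valP.
Qed.

Lemma walk_root v : walk vroot (val v) = v.
Proof.
case: v => s Hs; apply: val_inj => /=.
elim: s Hs => [|a s IH] // Hs.
by rewrite walk_cons val_step /= (IH (path_sorted Hs)) step_seq_cons.
Qed.

Lemma reduced_rev (s : seq 'I_d) : reduced s -> reduced (rev s).
Proof. by rewrite /reduced rev_sorted; apply: sub_sorted => x y /=; rewrite eq_sym. Qed.

Definition vrev v : V d := exist _ (rev (val v)) (reduced_rev (valP v)).

Lemma walk_rev v : walk v (val (vrev v)) = vroot.
Proof.
case: v => s Hs /=.
elim: s Hs => [|a s IH] Hs; first exact: val_inj.
rewrite rev_cons /walk foldr_rcons -/(walk _ _).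
have -> : step (exist _ (a :: s) Hs) a = exist _ s (path_sorted Hs).
  by apply: val_inj; rewrite val_step /step_seq /= eqxx.
exact: IH.
Qed.

Lemma walk_vrev v : walk (vrev v) (val v) = vroot.
Proof. by have := walk_rev (vrev v); rewrite /= revK. Qed.

Definition route u w : seq 'I_d := val (walk (vrev u) (val w)).

Lemma reduced_route u w : reduced (route u w).
Proof. exact: valP. Qed.

Lemma walk_route u w : walk u (route u w) = w.
Proof. by rewrite /route walkA walk_rev walk_root. Qed.

Lemma route_step u w a : route u (step w a) = step_seq (route u w) a.
Proof. by rewrite /route val_step walk_step_seq ?val_step //; exact: valP. Qed.

Lemma route_id u : route u u = [::].
Proof. by rewrite /route walk_vrev. Qed.

Lemma odd_walk x t :
  odd (size (val (walk x t))) = odd (size (val x)) (+) odd (size t).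
Proof. by elim: t => [|a t IH] /=; rewrite ?addbF // odd_step IH addbN. Qed.

End Tree.

Arguments vroot {d}.

Section LocalPermutations.
Variable d : nat.
Implicit Types (w : V d) (a b : 'I_d) (g : V d -> V d).

Lemma loc_step g w a b : g (step w a) = step (g w) b -> loc g w a = b.
Proof.
move=> gwa; rewrite /loc; case: pickP => [b' /eqP gwa'|/(_ b)] /=.
  by apply: (@step_inj _ (g w)); rewrite -gwa -gwa'.
by rewrite gwa eqxx.
Qed.

Lemma aut_step g w a : is_aut g -> g (step w a) = step (g w) (lp g w a).
Proof.
move=> [[g' gK _] g_adj].
have gstep c : g (step w c) = step (g w) (loc g w c).
  have /adjP[b gwc] : adj (g w) (g (step w c)).
    by rewrite g_adj; apply/adjP; exists c.
  by rewrite gwc (loc_step gwc).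
have loc_inj : injective (loc g w).
  move=> a' b' ab'; apply: (@step_inj _ w); apply: (can_inj gK).
  by rewrite !gstep ab'.
suff -> : lp g w = perm loc_inj by rewrite permE.
rewrite /lp; have -> : [ffun c => loc g w c] = pval (perm loc_inj).
  by apply/ffunP => c; rewrite ffunE pvalE permE.
exact: valKd.
Qed.

Lemma lp_step g w a b : is_aut g -> g (step w a) = step (g w) b -> lp g w a = b.
Proof. by move=> g_aut gwa; apply: (@step_inj _ (g w)); rewrite -aut_step. Qed.

End LocalPermutations.

Section StepRule.
Variables (d : nat) (g : V d -> V d) (Phi : V d -> {perm 'I_d}).
Implicit Types (u w x y : V d) (a b c : 'I_d) (t : seq 'I_d).
Hypothesis g_step : forall w c, g (step w c) = step (g w) (Phi w c).

Lemma rule_step_back w a : Phi (step w a) a = Phi w a.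
Proof.
apply: (@step_inj _ (step (g w) (Phi w a))).
by rewrite -(g_step w a) -g_step stepK g_step stepK.
Qed.

(* The image of a reduced path is a reduced path: consecutive letters
   [Phi _ a'] and [Phi _ a] differ since [rule_step_back] makes them images
   of [a'] and [a] by the same permutation. *)
Lemma route_image x t : reduced t ->
  size (route (g x) (g (walk x t))) = size t /\
  (forall a s, t = a :: s ->
     ohead (route (g x) (g (walk x t))) = Some (Phi (walk x s) a)).
Proof.
elim: t => [|a s IH] Ht; first by rewrite /= route_id.
have [IHsize IHhead] := IH (path_sorted Ht).
have new_head : ohead (route (g x) (g (walk x s))) != Some (Phi (walk x s) a).
  case: s Ht {IH IHsize} IHhead => [|a' s] Ht IHhead; first by rewrite /= route_id.
  rewrite (IHhead a' s erefl) -rule_step_back -walk_cons.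
  by apply/eqP => -[/perm_inj aa']; move: Ht => /= /andP[]; rewrite aa' eqxx.
rewrite walk_cons g_step route_step /step_seq (negbTE new_head) /=.
by split; [rewrite IHsize | move=> a0 s0 [-> ->]].
Qed.

Lemma rule_inj : injective g.
Proof.
move=> x y gxy.
have [] := route_image x (reduced_route x y).
rewrite walk_route -gxy route_id => route0 _.
by rewrite -(walk_route x y); case: (route x y) route0.
Qed.

Lemma rule_surj y : exists x, g x == y.
Proof.
rewrite -(walk_route (g vroot) y).
elim: (route (g vroot) y) => [|a t [x /eqP gx]]; first by exists vroot.
by exists (step x ((Phi x)^-1 a)); rewrite g_step gx permKV.
Qed.

Lemma rule_aut : is_aut g /\ forall w, lp g w = Phi w.
Proof.
have g_bij : bijective g.
  exists (fun y => xchoose (rule_surj y)) => [x|y].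
    by apply: rule_inj; exact/eqP/(xchooseP (rule_surj (g x))).
  exact/eqP/(xchooseP (rule_surj y)).
have g_aut : is_aut g.
  split=> // u w; apply/adjP/adjP => -[b].
    by move=> gw; exists ((Phi u)^-1 b); apply: rule_inj; rewrite g_step permKV.
  by move->; exists (Phi u b); rewrite g_step.
by split=> // w; apply/permP => a; apply: (lp_step g_aut); rewrite g_step.
Qed.

Lemma rule_odd x : odd (size (val (g x))) = odd (size (val x)) ->
  forall w, odd (size (val (g w))) = odd (size (val w)).
Proof.
move=> gx w; have [route_size _] := route_image x (reduced_route x w).
rewrite walk_route in route_size.
have := odd_walk (g x) (route (g x) (g w)); have := odd_walk x (route x w).
by rewrite !walk_route route_size gx => -> ->.
Qed.

End StepRule.

Section Build.
Variables (d : nat) (u0 w0 : V d) (P0 : {perm 'I_d}).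
Variable R : V d -> V d -> 'I_d -> 'I_d -> {perm 'I_d}.
Hypothesis R_back : forall x y a b, R x y a b a = b.
Implicit Types (w : V d) (a c : 'I_d).

(* [build t] is the pair (image, local permutation) at [walk u0 t]; the local
   permutation [R x y a b] at a vertex [x] entered by the letter [a] and sent
   to [y] must map [a] to the colour [b] of the edge by which [y] was reached. *)
Fixpoint build (t : seq 'I_d) : V d * {perm 'I_d} :=
  if t is a :: s then
    let b := (build s).2 a in
    let y := step (build s).1 b in
    (y, R (walk u0 t) y a b)
  else (w0, P0).

Definition build_map w := (build (route u0 w)).1.
Definition build_lp w := (build (route u0 w)).2.

Lemma build_step w c : build_map (step w c) = step (build_map w) (build_lp w c).
Proof.
rewrite /build_map /build_lp route_step /step_seq.
case: (route u0 w) => [|a t] //=.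
by case: eqP => [[->]|_] //=; rewrite R_back stepK.
Qed.

Lemma build_map_u0 : build_map u0 = w0.
Proof. by rewrite /build_map route_id. Qed.

Lemma build_lp_u0 : build_lp u0 = P0.
Proof. by rewrite /build_lp route_id. Qed.

Lemma build_lp_cases w : w = u0 \/
  exists a, build_lp w = R w (build_map w) a (build_lp (step w a) a).
Proof.
rewrite /build_lp /build_map.
case route_w: (route u0 w) => [|a s].
  by left; rewrite -(walk_route u0 w) route_w.
right; exists a; rewrite route_step route_w /step_seq /= eqxx /=.
by rewrite -walk_cons -route_w walk_route.
Qed.

Lemma build_lp_invariant (Q : {perm 'I_d} -> Prop) :
  Q P0 -> (forall x y a p, Q p -> Q (R x y a (p a))) -> forall w, Q (build_lp w).
Proof.
by move=> Q0 QR w; rewrite /build_lp; elim: (route u0 w) => //= a s; apply: QR.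
Qed.

End Build.

Section Edges.
Variable d : nat.
Implicit Types (x y : V d) (e : E d) (g : V d -> V d) (b c : 'I_d).

Definition links e x y :=
  (val e = x /\ vbehead (val e) = y) \/ (val e = y /\ vbehead (val e) = x).

Lemma links_sym e x y : links e x y -> links e y x.
Proof. by case=> ?; [right|left]. Qed.

Lemma links_pair e x y x' y' : links e x y -> links e x' y' ->
  (x' = x /\ y' = y) \/ (x' = y /\ y' = x).
Proof. by case=> -[<- <-] [] [<- <-]; [left|right|right|left]. Qed.

Lemma links_step y b : exists e, links e y (step y b).
Proof.
case: (boolP (ohead (val y) == Some b)) => [hb|nhb].
  have y_pos : 0 < size (val y) by case: (val y) hb.
  exists (exist _ y y_pos); left; split=> //.
  by apply: val_inj; rewrite val_step /step_seq hb.
have yb_pos : 0 < size (val (step y b)) by rewrite size_step (negbTE nhb).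
exists (exist _ (step y b) yb_pos); right; split=> //.
by apply: val_inj; rewrite /= /step_seq (negbTE nhb).
Qed.

Lemma edge_even_end e : exists x c, ~~ odd (size (val x)) /\ links e x (step x c).
Proof.
case: e => [[[|c s] cs] pos] //=.
pose y : V d := exist _ s (path_sorted cs).
have e_yc : exist _ (c :: s) cs = step y c.
  by apply: val_inj; rewrite val_step /= step_seq_cons.
have [odd_s|even_s] := boolP (odd (size s)).
  exists (step y c), c; rewrite stepK odd_step negbK; split=> //.
  by left; split; [exact: e_yc | apply: val_inj].
by exists y, c; split=> //; right; split; [exact: e_yc | apply: val_inj].
Qed.

Lemma eact_links g e e' x y :
  links e x y -> links e' (g x) (g y) -> eact g e = e'.
Proof.
suff key : links e' (g (val e)) (g (vbehead (val e))) -> eact g e = e'.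
  by case=> -[<- <-] e'g; apply: key => //; exact: links_sym.
move=> e'g; have e'_pos := valP e'.
rewrite /eact /longer.
case: e'g => [[<- <-]|[<- <-]]; rewrite /vbehead /= size_behead.
  by rewrite ltn_predL e'_pos valK.
by rewrite ltnNge leq_pred /= valK.
Qed.

Lemma links_eact g e x c : is_aut g -> links e x (step x c) ->
  links (eact g e) (g x) (g (step x c)).
Proof.
move=> g_aut exc; have [e' e'g] := links_step (g x) (lp g x c).
by rewrite -(aut_step _ _ g_aut) in e'g; rewrite (eact_links exc e'g).
Qed.

Lemma eact_fixed g e x c : is_aut g ->
  (forall v, odd (size (val (g v))) = odd (size (val v))) ->
  links e x (step x c) -> eact g e = e -> g x = x /\ g (step x c) = step x c.
Proof.
move=> g_aut g_odd exc ge; have := links_eact g_aut exc; rewrite ge.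
case/(links_pair exc) => -[gx gxc] //.
by have := g_odd x; rewrite gx odd_step; case: (odd _).
Qed.

End Edges.

Section Action.
Variables (d n : nat) (F F' : {group {perm 'I_d}}) (beta : 'I_n -> {set {perm 'I_d}}).
Hypothesis sFF' : F \subset F'.
Hypothesis F'_orbit : forall p a, p \in F' -> p a \in orbit 'P F a.
Hypothesis beta_inj : injective beta.
Hypothesis beta_rcoset : forall i, beta i \in rcosets F F'.
Hypothesis beta_onto : forall C, C \in rcosets F F' -> exists i, beta i = C.
Hypothesis beta0 : forall i : 'I_n, val i = 0 -> beta i = F.
Implicit Types (p : {perm 'I_d}) (i j : 'I_n) (a b c : 'I_d).

Lemma alpha_rcoset p i j : beta i :* p = beta j -> alpha beta p i = j.
Proof.
move=> ij; rewrite /alpha; case: pickP => [j' /eqP ij'|/(_ j)] /=.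
  by apply: beta_inj; rewrite ij' ij.
by rewrite ij eqxx.
Qed.

Lemma beta_rcosetM p i : p \in F' -> exists j, beta i :* p = beta j.
Proof.
move=> pF'; case/rcosetsP: (beta_rcoset i) => s sF' ->.
have [j Fj] : exists j, beta j = F :* (s * p).
  by apply: beta_onto; apply/rcosetsP; exists (s * p); rewrite ?groupM.
by exists j; rewrite Fj rcosetM.
Qed.

Lemma alpha_F p i : p \in F -> beta i = F -> alpha beta p i = i.
Proof. by move=> pF Fi; apply: alpha_rcoset; rewrite Fi rcoset_id. Qed.

Lemma alpha_fixed_F p i : p \in F' -> beta i = F -> alpha beta p i = i -> p \in F.
Proof.
move=> pF' Fi pi; have [j ij] := beta_rcosetM i pF'.
move: (alpha_rcoset ij); rewrite pi => ji; subst j.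
have Fp : F :* p = F by rewrite -Fi.
by rewrite -Fp rcoset_refl.
Qed.

(* If [p] fixes the coset [F :* s] then [s * p * s^-1] lies in [F]; it also
   fixes a colour, so regularity of [F] makes it trivial. *)
Lemma alpha_fixed_regular p i c : regular_pgroup F -> p \in F' ->
  alpha beta p i = i -> p c = c -> p = 1.
Proof.
move=> [_ reg] pF' pi pc.
case/rcosetsP: (beta_rcoset i) => s sF' Fs.
have [j ij] := beta_rcosetM i pF'.
move: (alpha_rcoset ij); rewrite pi => ji; subst j.
have spsF : s * p * s^-1 \in F.
  by rewrite -mem_rcoset; apply/rcoset_eqP; rewrite rcosetM -Fs ij.
have : s * p * s^-1 \in 'C_F[s^-1 c | 'P].
  by rewrite in_setI spsF; apply/astab1P; rewrite /= apermE !permM permKV pc.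
rewrite reg inE => /eqP sps1.
have sp : s * p = s by rewrite -[RHS]mul1g -sps1 mulgKV.
by apply: (mulgI s); rewrite sp mulg1.
Qed.

(* Writing [beta i = F :* si] and [beta j = F :* sj], the witness is
   [si^-1 * h * sj] with [h \in F] moving [si^-1 a] to [sj^-1 b]; such an [h]
   exists because [F'] preserves the [F]-orbits. *)
Lemma alpha_transfer i j a b : b \in orbit 'P F a ->
  exists p, [/\ p \in F', p a = b, alpha beta p i = j &
                (val i = 0 -> val j = 0 -> p \in F)].
Proof.
move=> ab.
have [/andP[/eqP i0 /eqP j0]|not00] := boolP ((val i == 0) && (val j == 0)).
  case/orbitP: ab => h hF <-; exists h; split=> //; first exact: (subsetP sFF').
  by apply: alpha_rcoset; rewrite (beta0 i0) (beta0 j0) rcoset_id.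
case/rcosetsP: (beta_rcoset i) => si siF' Fsi.
case/rcosetsP: (beta_rcoset j) => sj sjF' Fsj.
have : sj^-1 b \in orbit 'P F (si^-1 a).
  apply: (orbit_trans (F'_orbit b (groupVr sjF'))); apply: (orbit_trans ab).
  by rewrite orbit_sym; apply: F'_orbit; rewrite groupV.
case/orbitP => h hF; rewrite /= apermE => hab.
exists (si^-1 * h * sj); split.
- by rewrite !groupM ?groupV // (subsetP sFF').
- by rewrite !permM hab permKV.
- by apply: alpha_rcoset; rewrite Fsi Fsj -rcosetM mulgA mulKVg rcosetM rcoset_id.
- by move=> /eqP i0 /eqP j0; rewrite i0 j0 in not00.
Qed.

(* Outside the orbit of [a] the default [tperm a b] still maps [a] to [b], as
   [build] requires.  Forcing [p \in F] between trivial cosets is what puts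
   the automorphisms built from [transfer] in [G(F, F')]. *)
Definition transfer i j a b : {perm 'I_d} :=
  odflt (tperm a b) [pick p in F' | [&& p a == b, alpha beta p i == j &
                        (val i == 0) && (val j == 0) ==> (p \in F)]].

Lemma transfer_a i j a b : transfer i j a b a = b.
Proof.
by rewrite /transfer; case: pickP => [p /andP[_ /and3P[/eqP]]|_] //=; rewrite tpermL.
Qed.

Lemma transfer_spec i j a b : b \in orbit 'P F a ->
  [/\ transfer i j a b \in F', alpha beta (transfer i j a b) i = j &
      (val i = 0 -> val j = 0 -> transfer i j a b \in F)].
Proof.
move=> ab; rewrite /transfer.
case: pickP => [p /andP[pF' /and3P[_ /eqP -> p00]]|none] /=.
  by split=> // /eqP i0 /eqP j0; rewrite i0 j0 in p00.
have [p [pF' pa pi p00]] := alpha_transfer i j ab.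
move: (none p); rewrite pF' pa pi !eqxx /=.
by case: (val i =P 0) => // i0; case: (val j =P 0) => //= j0; rewrite p00.
Qed.

Section Extension.
Variables (f f' : V d -> 'I_n) (u0 w0 : V d) (a0 b0 : 'I_d).
Hypotheses (f_fin : finsupp f) (f'_fin : finsupp f').
Hypothesis same_parity : odd (size (val u0)) = odd (size (val w0)).
Hypothesis a0b0 : b0 \in orbit 'P F a0.

Let P0 := transfer (f u0) (f' w0) a0 b0.
Let rule x y a b := transfer (f x) (f' y) a b.
Let g := build_map u0 w0 P0 rule.
Let Phi := build_lp u0 w0 P0 rule.

Let g_step w c : g (step w c) = step (g w) (Phi w c).
Proof. by apply: build_step => *; apply: transfer_a. Qed.

Let Phi_F' w : Phi w \in F'.
Proof.
apply: (@build_lp_invariant _ u0 w0 P0 rule (fun p => p \in F')).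
  by case: (transfer_spec (f u0) (f' w0) a0b0).
by move=> x y a p pF'; case: (transfer_spec (f x) (f' y) (F'_orbit a pF')).
Qed.

Let Phi_spec w : alpha beta (Phi w) (f w) = f' (g w) /\
  (val (f w) = 0 -> val (f' (g w)) = 0 -> Phi w \in F).
Proof.
rewrite /Phi /g; have [->|[a ->]] := build_lp_cases u0 w0 P0 rule w.
  by rewrite build_lp_u0 build_map_u0; case: (transfer_spec (f u0) (f' w0) a0b0).
by case: (transfer_spec (f w) (f' (g w)) (F'_orbit a (Phi_F' (step w a)))).
Qed.

Lemma extension : exists g, [/\ inGstar F F' g,
  forall w, f' (g w) = alpha beta (lp g w) (f w), g u0 = w0 &
  g (step u0 a0) = step w0 b0].
Proof.
have [g_aut lpE] := rule_aut g_step.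
have [[g' gK _] _] := g_aut.
have g_u0 : g u0 = w0 by apply: build_map_u0.
exists g; split=> //.
- split; last by apply: (rule_odd g_step (x := u0)); rewrite g_u0.
  split; [exact: g_aut | by move=> v; rewrite lpE; apply: Phi_F' | ].
  case: f_fin => sf sfP; case: f'_fin => sf' sf'P.
  exists (sf ++ map g' sf') => v; rewrite lpE mem_cat => vF.
  have [_ Phi_F] := Phi_spec v.
  case: (val (f v) =P 0) => [fv0|/eqP fv]; last by rewrite sfP.
  case: (val (f' (g v)) =P 0) => [f'gv0|/eqP f'gv]; first by rewrite Phi_F in vF.
  by rewrite -[v]gK map_f ?orbT ?sf'P.
- by move=> w; rewrite lpE; case: (Phi_spec w).
- by rewrite g_step g_u0 /Phi build_lp_u0 transfer_a.
Qed.

End Extension.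

Lemma Gstar_move (f f' : V d -> 'I_n) (e e' : E d) u w a b :
  finsupp f -> finsupp f' -> odd (size (val u)) = odd (size (val w)) ->
  b \in orbit 'P F a -> links e u (step u a) -> links e' w (step w b) ->
  exists g, inGstar F F' g /\ xact beta g (f, e) (f', e').
Proof.
move=> f_fin f'_fin uw ab e_ua e'_wb.
have [g [g_star g_f gu gua]] := extension f_fin f'_fin uw ab.
by exists g; split=> //; split=> //=; apply: (eact_links e_ua); rewrite gu gua.
Qed.

Lemma Gstar_transitive : [transitive F, on [set: 'I_d] | 'P] ->
  forall x y : (V d -> 'I_n) * E d, finsupp x.1 -> finsupp y.1 ->
  exists g, inGstar F F' g /\ xact beta g x y.
Proof.
move=> F_trans [f e] [f' e'] /= f_fin f'_fin.
have [u [a [u_even e_ua]]] := edge_even_end e.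
have [w [b [w_even e'_wb]]] := edge_even_end e'.
apply: (Gstar_move f_fin f'_fin _ _ e_ua e'_wb); last by rewrite (atransP F_trans) ?inE.
by rewrite (negbTE u_even) (negbTE w_even).
Qed.

Definition edge1 (c : 'I_d) : E d := exist _ (step vroot c) isT.

Lemma Gstar_edge1 (f0 f : V d -> 'I_n) (e : E d) : finsupp f0 -> finsupp f ->
  exists c, exists g, inGstar F F' g /\ xact beta g (f0, edge1 c) (f, e).
Proof.
move=> f0_fin f_fin; have [w [c [w_even e_wc]]] := edge_even_end e.
exists c; apply: (Gstar_move (u := vroot) f0_fin f_fin _ (orbit_refl _ _ _) _ e_wc).
  by rewrite (negbTE w_even).
by right; split; last apply: val_inj.
Qed.

Lemma stabilizer_zero (e : E d) (f0 : V d -> 'I_n) (g : V d -> V d) :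
  (forall v, val (f0 v) = 0) ->
  (inG F F' g /\ xact beta g (f0, e) (f0, e)) <-> (inU F g /\ eact g e = e).
Proof.
move=> f00; have f0_const v w : f0 v = f0 w by apply: val_inj; rewrite !f00.
split=> [[[g_aut gF' _] [g_f ge]]|[[g_aut gF] ge]].
  split=> //; split=> // v; apply: (alpha_fixed_F (gF' v) (beta0 (f00 v))).
  by rewrite -g_f; apply: f0_const.
split; first split=> //.
- by move=> v; apply: (subsetP sFF' _ (gF v)).
- by exists [::] => v; rewrite gF.
by split=> // w /=; rewrite (alpha_F (gF w) (beta0 (f00 w))); apply: f0_const.
Qed.

Lemma regular_fixed_step (f : V d -> 'I_n) g w c :
  regular_pgroup F -> is_aut g ->
  (forall v, lp g v \in F') -> (forall v, f (g v) = alpha beta (lp g v) (f v)) ->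
  g w = w -> g (step w c) = step w c -> forall a, g (step w a) = step w a.
Proof.
move=> F_reg g_aut gF' g_f gw gwc a.
have lp_c : lp g w c = c by apply: (lp_step g_aut); rewrite gw gwc.
have lp_f : alpha beta (lp g w) (f w) = f w by rewrite -g_f gw.
have lp1 := alpha_fixed_regular F_reg (gF' w) lp_f lp_c.
by rewrite (aut_step _ _ g_aut) lp1 perm1 gw.
Qed.

Lemma Gstar_free (f : V d -> 'I_n) (e : E d) g : regular_pgroup F ->
  inGstar F F' g -> xact beta g (f, e) (f, e) -> forall v, g v = v.
Proof.
move=> F_reg [[g_aut gF' _] g_odd] [g_f ge].
have [x [c [_ e_xc]]] := edge_even_end e.
have [gx gxc] := eact_fixed g_aut g_odd e_xc ge.
have spread := regular_fixed_step F_reg g_aut gF' g_f.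
have fixed_walk t : g (walk x t) = walk x t /\
    forall a, g (step (walk x t) a) = step (walk x t) a.
  elim: t => [|a t [gxt IH]]; first by split=> //; apply: (spread x c gx gxc).
  by split; [exact: IH | apply: (spread _ a (IH a)); rewrite stepK].
by move=> v; rewrite -(walk_route x v); case: (fixed_walk (route x v)).
Qed.

End Action.

Theorem proposition2 (d n : nat) (F F' : {group {perm 'I_d}})
    (beta : 'I_n -> {set {perm 'I_d}}) :
  3 <= d ->
  F \subset F' ->
  (forall (p : {perm 'I_d}) (a : 'I_d), p \in F' -> p a \in orbit 'P F a) ->
  n = (#|F' : F|)%g ->
  injective beta ->
  (forall i, beta i \in rcosets F F') ->
  (forall C, C \in rcosets F F' -> exists i, beta i = C) ->
  (forall i : 'I_n, val i = 0 -> beta i = F) ->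
  [/\ (* (a) finitely many orbits of G(F,F')^* *)
      (exists (k : nat) (xs : nat -> (V d -> 'I_n) * E d),
         (forall i, i < k -> finsupp (xs i).1) /\
         forall y : (V d -> 'I_n) * E d, finsupp y.1 ->
           exists2 i, i < k & exists g, inGstar F F' g /\ xact beta g (xs i) y),
      (* (a) transitivity when F is transitive *)
      ([transitive F, on [set: 'I_d] | 'P] ->
       forall x y : (V d -> 'I_n) * E d, finsupp x.1 -> finsupp y.1 ->
         exists g, inGstar F F' g /\ xact beta g x y),
      (* (b) stabilizer of ((0), e) in G(F,F') = stabilizer of e in U(F) *)
      (forall (e : E d) (f0 : V d -> 'I_n) (g : V d -> V d),
         (forall v, val (f0 v) = 0) ->
         (inG F F' g /\ xact beta g (f0, e) (f0, e)) <-> (inU F g /\ eact g e = e))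
    & (* consequence: F regular => G(F,F')^* acts freely and transitively *)
      (regular_pgroup F ->
       (forall (x : (V d -> 'I_n) * E d) (g : V d -> V d), finsupp x.1 ->
          inGstar F F' g -> xact beta g x x -> forall v, g v = v) /\
       (forall x y : (V d -> 'I_n) * E d, finsupp x.1 -> finsupp y.1 ->
          exists g, inGstar F F' g /\ xact beta g x y))].
Proof.
move=> d3 sFF' F'_orbit n_index beta_inj beta_rcoset beta_onto beta0.
have trans := Gstar_transitive sFF' F'_orbit beta_inj beta_rcoset beta0.
split=> //.
- have [i0 i0_0] : exists i0 : 'I_n, val i0 = 0.
    by rewrite n_index; exists (Ordinal (indexg_gt0 F' F)).
  pose c0 : 'I_d := Ordinal (leq_trans (isT : 0 < 3) d3).
  pose zero : V d -> 'I_n := fun=> i0.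
  have zero_fin : finsupp zero by exists [::] => v; rewrite i0_0.
  exists d, (fun i => (zero, edge1 (insubd c0 i))); split=> // -[f e] /= f_fin.
  have [c g_move] :=
    Gstar_edge1 sFF' F'_orbit beta_inj beta_rcoset beta0 e zero_fin f_fin.
  by exists (val c); [exact: ltn_ord | rewrite valKd].
- by move=> e f0 g f00; apply: stabilizer_zero.
- move=> F_reg; split; last exact: trans (proj1 F_reg).
  by move=> [f e] g _; apply: (Gstar_free beta_inj beta_rcoset beta_onto F_reg).
Qed.
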